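(* Let $\mathscr T=(V,\mathcal E)$ be the directed Cartesian product of rooted directed trees $\mathscr T_1,\dots,\mathscr T_d$ and let $S_{\boldsymbol\lambda}=(S_1,\dots,S_d)$ be a commuting multishift on $\mathscr T$. Then for each $j=1,\dots,d$, $S_j$ is analytic, i.e. $\bigcap_{n\in\mathbb N}\mathrm{ran}\,S_j^n=\{0\}$.
   Context: Directed trees: no loops or circuits, connected ignoring orientation, unique parent $\mathsf{par}(v)$ for vertices with incoming edges; rooted: unique parentless vertex $\mathsf{root}$; $\mathsf{Chi}(u)=\{v:(u,v)\in\mathcal E\}$; all leafless. Directed Cartesian product of rooted trees $\mathscr T_j=(V_j,\mathcal E_j)$: $V=V_1\times\dots\times V_d$ (countably infinite), $(v,w)\in\mathcal E$ iff for some $k$, $(v_k,w_k)\in\mathcal E_k$ and $w_j=v_j$ ($j\ne k$). $\mathsf{par}_j(v)$ replaces $v_j\ne\mathsf{root}_j$ by $\mathsf{par}(v_j)$. Multishift with positive weights $\lambda^{(j)}_v$: $(S_jf)(v)=\lambda^{(j)}_vf(\mathsf{par}_j(v))$ if $v_j\ne\mathsf{root}_j$, else $0$; each $S_j$ bounded on $l^2(V)$. *)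

From HB Require Import structures.
From mathcomp Require Import all_boot all_order all_algebra.
From mathcomp Require Import boolp classical_sets reals constructive_ereal ereal esum.
From mathcomp Require Import complex.
From Stdlib Require Import Relations.
Set Implicit Arguments. Unset Strict Implicit. Unset Printing Implicit Defensive.
Import Order.TTheory GRing.Theory Num.Theory.
Local Open Scope ring_scope.

(* A rooted directed tree on vertex set T with edge relation E and root [root]:
   no loops; every vertex has at most one parent; the root is the unique
   parentless vertex; every vertex is a descendant of the root (connectedness,
   which together with the above excludes circuits). *)
Record rooted_directed_tree (T : Type) (E : T -> T -> Prop) (root : T) : Prop := {
  rdt_noloop : forall u, ~ E u u;
  rdt_par_uniq : forall u v w, E u w -> E v w -> u = v;
  rdt_root_parentless : forall u, ~ E u root;
  rdt_has_parent : forall v, v <> root -> exists u, E u v;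
  rdt_connected : forall v, clos_refl_trans T E root v }.

Definition leafless (T : Type) (E : T -> T -> Prop) : Prop :=
  forall u, exists v, E u v.

(* par(v): the (unique, when it exists) parent of v; v itself for the root *)
Definition parent (T : Type) (E : T -> T -> Prop) (v : T) : T :=
  match pselect (exists u, E u v) with
  | left h => projT1 (cid h)
  | right _ => v
  end.

Notation prodV T := (forall j, T j) (only parsing).

Definition par_j (d : nat) (T : 'I_d -> countType) (E : forall j, T j -> T j -> Prop)
  (j : 'I_d) (v : prodV T) : prodV T :=
  dfwith v (parent (E j) (v j)).

Definition sqmod (R : realType) (z : R[i]) : R :=
  (complex.Re z) ^+ 2 + (complex.Im z) ^+ 2.

Definition l2norm2 (R : realType) (V : choiceType) (f : V -> R[i]) : \bar R :=
  (\esum_(v in [set: V]) (sqmod (f v))%:E)%E.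

Definition l2 (R : realType) (V : choiceType) (f : V -> R[i]) : Prop :=
  (l2norm2 f < +oo)%E.

Definition mshift (R : realType) (d : nat) (T : 'I_d -> countType)
  (E : forall j, T j -> T j -> Prop) (root : forall j, T j)
  (lam : 'I_d -> prodV T -> R) (j : 'I_d) (f : prodV T -> R[i]) : prodV T -> R[i] :=
  fun v => if v j == root j then 0 else ((lam j v)%:C * f (par_j E j v))%C.

Definition bounded_on_l2 (R : realType) (V : choiceType) (S : (V -> R[i]) -> (V -> R[i])) : Prop :=
  exists C : R, forall f, l2 f -> l2 (S f) /\ (l2norm2 (S f) <= C%:E * l2norm2 f)%E.

Definition analytic_l2 (R : realType) (V : choiceType) (S : (V -> R[i]) -> (V -> R[i])) : Prop :=
  forall f : V -> R[i], (forall n : nat, exists g, l2 g /\ f = iter n S g) -> f = (fun _ => 0).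

From HB Require Import structures.
From mathcomp Require Import all_boot all_order all_algebra.
From mathcomp Require Import boolp reals.
From mathcomp Require Import complex.
From Stdlib Require Import Relations.
Import Order.TTheory GRing.Theory Num.Theory.
Local Open Scope ring_scope.

(* Each application of S_j reads the input at the j-parent and vanishes when the
   j-th coordinate is the root.  Hence S_j^n g vanishes at every vertex whose
   j-th coordinate has depth less than n in T_j.  Every vertex of a rooted tree
   has finite depth, so a function lying in ran S_j^n for all n is zero. *)

Lemma parentE (X : Type) (E : X -> X -> Prop) (y x : X) :
  (forall u v w, E u w -> E v w -> u = v) -> E y x -> parent E x = y.
Proof.
move=> par_uniq Eyx; rewrite /parent; case: pselect => [h|h]; last first.
  by exfalso; apply: h; exists y.
by apply: (par_uniq _ _ x) => //; exact: (projT2 (cid h)).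
Qed.

Section MultishiftPowers.
Variables (R : realType) (d : nat) (T : 'I_d -> countType).
Variables (E : forall j : 'I_d, T j -> T j -> Prop) (root : forall j : 'I_d, T j).
Variables (lam : 'I_d -> prodV T -> R) (j : 'I_d).
Hypothesis tree_j : rooted_directed_tree (E j) (root j).

Local Notation S := (mshift E root lam j).

Lemma par_j_coord (v : prodV T) (y : T j) : E j y (v j) -> par_j E j v j = y.
Proof. by move=> Eyv; rewrite /par_j dfwith_in; apply: parentE (rdt_par_uniq tree_j) Eyv. Qed.

Lemma mshift_root (g : prodV T -> R[i]) (v : prodV T) : v j = root j -> S g v = 0.
Proof. by move=> vj; rewrite /mshift vj eqxx. Qed.

Lemma mshift_child (g : prodV T -> R[i]) (v : prodV T) (y : T j) :
  E j y (v j) -> S g v = ((lam j v)%:C * g (par_j E j v))%C.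
Proof.
move=> Eyv; have vj : v j != root j.
  by apply/eqP => vj; move: Eyv; rewrite vj; exact: (rdt_root_parentless tree_j (u := y)).
by rewrite /mshift (negbTE vj).
Qed.

Lemma iter_mshift_eq0_eventually (x : T j) :
  clos_refl_trans_n1 (T j) (E j) (root j) x ->
  exists N, forall n, (N <= n)%N ->
    forall (g : prodV T -> R[i]) (v : prodV T), v j = x -> iter n S g v = 0.
Proof.
elim=> [|y z Eyz _ [N IH]].
  by exists 1%N => -[|n] // _ g v vj; rewrite iterS mshift_root.
exists N.+1 => -[|n] // Nn g v vj.
have Eyv : E j y (v j) by rewrite vj.
by rewrite iterS (mshift_child _ _ _ Eyv) (IH n) ?mulr0 ?(par_j_coord _ _ Eyv).
Qed.

Lemma mshift_analytic : analytic_l2 S.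
Proof.
move=> f f_ran; apply/funext => v.
have root_to_v := clos_rt_rtn1 _ _ _ _ (rdt_connected tree_j (v j)).
have [N vanish] := iter_mshift_eq0_eventually _ root_to_v.
have [g [_ ->]] := f_ran N.
exact: (vanish N (leqnn N) g v erefl).
Qed.

End MultishiftPowers.

Theorem mainTheorem14 (R : realType) (d : nat) (T : 'I_d -> countType)
  (E : forall j : 'I_d, T j -> T j -> Prop) (root : forall j : 'I_d, T j)
  (lam : 'I_d -> prodV T -> R) :
  (forall j : 'I_d, rooted_directed_tree (E j) (root j)) ->
  (forall j : 'I_d, leafless (E j)) ->
  (forall (j : 'I_d) (v : prodV T), v j != root j -> 0 < lam j v) ->
  (forall j : 'I_d, bounded_on_l2 (mshift E root lam j)) ->
  (forall (i j : 'I_d) (f : prodV T -> R[i]), l2 f ->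
      mshift E root lam i (mshift E root lam j f) =
      mshift E root lam j (mshift E root lam i f)) ->
  forall j : 'I_d, analytic_l2 (mshift E root lam j).
Proof. by move=> trees _ _ _ _ j; exact: mshift_analytic. Qed.
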